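(* Let $\kappa>-1$ and $\Gamma$ a constant real $n\times r$ matrix. For a curve $(X(t),P(t))$ in $T^*V(n,r)$ set $\Phi=PX^T-XP^T\in so(n)$ and $\Psi=X^TP-P^TX\in so(r)$. Then the system $$\dot X=P-(1+2\kappa)XP^TX,\qquad \dot P=(1+2\kappa)PX^TP-\Gamma+X\Lambda,\qquad \Lambda=\tfrac12\left(-2P^TP+X^T\Gamma+\Gamma^TX\right)$$ is equivalent to the system $$\dot X=\Phi X+\kappa X\Psi,\qquad \dot\Phi=X\Gamma^T-\Gamma X^T,\qquad \dot\Psi=\Gamma^TX-X^T\Gamma.$$
   Context: $V(n,r)=\{X\in M_{n,r}(\mathbb R):X^TX=\mathbf I_r\}$, and $T^*V(n,r)$ is realized as the set of pairs $(X,P)$ of real $n\times r$ matrices with $X^TX=\mathbf I_r$, $X^TP+P^TX=0$. The first system is the Hamiltonian flow of $H=\frac12\operatorname{tr}(P^TP)-\frac{1+2\kappa}{2}\operatorname{tr}((XP^T)^2)+\operatorname{tr}(X^T\Gamma)$ on $T^*V(n,r)$; $\Phi$ and $\Psi$ are the momentum mappings of the left $SO(n)$- and right $SO(r)$-actions. *)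

From mathcomp Require Import all_boot all_algebra.
From mathcomp Require Import all_classical all_reals all_analysis.
Import GRing.Theory Num.Theory numFieldNormedType.Exports.

Set Implicit Arguments.
Unset Strict Implicit.
Unset Printing Implicit Defensive.

Local Open Scope ring_scope.

Definition in_TstarV (R : realType) (n r : nat) (X P : 'M[R]_(n, r)) : Prop :=
  X^T *m X = 1%:M /\ X^T *m P + P^T *m X = 0.

Definition Phi (R : realType) (n r : nat) (X P : 'M[R]_(n, r)) : 'M[R]_n :=
  P *m X^T - X *m P^T.
Definition Psi (R : realType) (n r : nat) (X P : 'M[R]_(n, r)) : 'M[R]_r :=
  X^T *m P - P^T *m X.

Definition Lambda (R : realType) (n r : nat) (Gamma X P : 'M[R]_(n, r)) : 'M[R]_r :=
  2^-1 *: (- (2%:R *: (P^T *m P)) + X^T *m Gamma + Gamma^T *m X).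

Definition system1 (R : realType) (n r : nat) (kappa : R) (Gamma : 'M[R]_(n, r))
    (X P : R -> 'M[R]_(n, r)) (t : R) : Prop :=
  derive1 X t = P t - (1 + 2%:R * kappa) *: (X t *m (P t)^T *m X t) /\
  derive1 P t = (1 + 2%:R * kappa) *: (P t *m (X t)^T *m P t) - Gamma
                + X t *m Lambda Gamma (X t) (P t).

Definition system2 (R : realType) (n r : nat) (kappa : R) (Gamma : 'M[R]_(n, r))
    (X P : R -> 'M[R]_(n, r)) (t : R) : Prop :=
  derive1 X t = Phi (X t) (P t) *m X t + kappa *: (X t *m Psi (X t) (P t)) /\
  derive1 (fun s => Phi (X s) (P s)) t = X t *m Gamma^T - Gamma *m (X t)^T /\
  derive1 (fun s => Psi (X s) (P s)) t = Gamma^T *m X t - (X t)^T *m Gamma.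

(* On T^*V(n,r) the constraints X^T X = I and X^T P = - P^T X let the momentum
   maps recover the momentum, P = Phi X - 1/2 X Psi, and they turn
   Phi X + kappa X Psi into the velocity P - (1 + 2 kappa) X P^T X of the first
   system.  Along a solution of the first system the derivatives of Phi and Psi
   only see Gamma, because Lambda is symmetric and drops out of the skew parts.
   Conversely, differentiating P = Phi X - 1/2 X Psi along a solution of the
   second system reproduces the force equation of the first. *)

From mathcomp Require Import all_boot all_algebra.
From mathcomp Require Import all_classical all_reals all_analysis.
From mathcomp Require Import ring.
Import GRing.Theory Num.Theory numFieldNormedType.Exports.
Local Open Scope ring_scope.

Section matrix_derivative.
Context {R : realFieldType}.
Implicit Types t : R.

Lemma entry_mulmx_fun m p q (A : R -> 'M[R]_(m, q)) (B : R -> 'M[R]_(q, p)) i j :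
  (fun s => (A s *m B s) i j) = \sum_(k < q) (fun s => A s i k * B s k j).
Proof. by apply/funext => s; rewrite mxE fct_sumE. Qed.

Lemma derivable_mulmx m p q (A : R -> 'M[R]_(m, q)) (B : R -> 'M[R]_(q, p)) t :
  derivable A t 1 -> derivable B t 1 -> derivable (fun s => A s *m B s) t 1.
Proof.
move=> /derivable_mxP dA /derivable_mxP dB; apply/derivable_mxP => i j.
rewrite entry_mulmx_fun; apply: derivable_sum => k.
exact: derivableM.
Qed.

Lemma derive_mulmx m p q (A : R -> 'M[R]_(m, q)) (B : R -> 'M[R]_(q, p)) t :
  derivable A t 1 -> derivable B t 1 ->
  'D_1 (fun s => A s *m B s) t = 'D_1 A t *m B t + A t *m 'D_1 B t.
Proof.
move=> hA hB; rewrite derive_mx; last exact: derivable_mulmx.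
rewrite (derive_mx hA) (derive_mx hB).
move/derivable_mxP: hA => dA; move/derivable_mxP: hB => dB.
apply/matrixP => i j; rewrite !mxE entry_mulmx_fun derive_sum => [|k]; last first.
  exact: derivableM.
rewrite -big_split /=; apply: eq_bigr => k _.
by rewrite deriveM // !mxE /= addrC [_ * B t k j]mulrC.
Qed.

Lemma entry_trmx_fun m p (A : R -> 'M[R]_(m, p)) i j :
  (fun s => (A s)^T i j) = (fun s => A s j i).
Proof. by apply/funext => s; rewrite mxE. Qed.

Lemma derivable_trmx m p (A : R -> 'M[R]_(m, p)) t :
  derivable A t 1 -> derivable (fun s => (A s)^T) t 1.
Proof.
move=> /derivable_mxP dA; apply/derivable_mxP => i j.
by rewrite entry_trmx_fun.
Qed.

Lemma derive_trmx m p (A : R -> 'M[R]_(m, p)) t :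
  derivable A t 1 -> 'D_1 (fun s => (A s)^T) t = ('D_1 A t)^T.
Proof.
move=> hA; rewrite derive_mx; last exact: derivable_trmx.
rewrite (derive_mx hA).
by apply/matrixP => i j; rewrite !mxE entry_trmx_fun.
Qed.

End matrix_derivative.

Arguments derivable_mulmx {R m p q A B t}.
Arguments derivable_trmx {R m p A t}.
Arguments derive_mulmx {R m p q A B t}.
Arguments derive_trmx {R m p A t}.

Lemma trmxD (R : nzRingType) m p (A B : 'M[R]_(m, p)) : (A + B)^T = A^T + B^T.
Proof. exact: linearD. Qed.

Lemma trmxN (R : nzRingType) m p (A : 'M[R]_(m, p)) : (- A)^T = - A^T.
Proof. exact: linearN. Qed.

Lemma trmxZ (R : nzRingType) m p (a : R) (A : 'M[R]_(m, p)) : (a *: A)^T = a *: A^T.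
Proof. exact: linearZ. Qed.

Ltac mx_expand :=
  repeat progress (rewrite ?(trmxD, trmxN, trmxZ, trmx_mul, trmxK,
    mulmxDl, mulmxDr, mulmxBl, mulmxBr, mulNmx, mulmxN, mulmxA,
    scalerDr, scalerBr, scalerN, opprD, opprK, mul1mx, mulmx1);
    rewrite -?scalemxAl -?scalemxAr ?scalerA).

(* After expansion both sides are linear combinations of products of the data;
   abstracting each product leaves an identity in the scalar field, checked
   entrywise. *)
Ltac mx_linear_close :=
  apply/matrixP => i j;
  repeat match goal with |- context[?A *m ?B] =>
    let M := fresh "M" in set M := A *m B; clearbody M end;
  rewrite !mxE; field; rewrite ?pnatr_eq0 //.

Section hamiltonian_flow.
Variables (R : realType) (n r : nat).
Implicit Types (c : R) (G X P : 'M[R]_(n, r)).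

Definition ham_velocity c X P := P - c *: (X *m P^T *m X).
Definition ham_force c G X P := c *: (P *m X^T *m P) - G + X *m Lambda G X P.

Lemma Phi_ham_flow c G X P :
  Phi (ham_velocity c X P) P + Phi X (ham_force c G X P) = X *m G^T - G *m X^T.
Proof. rewrite /Phi /ham_velocity /ham_force /Lambda; mx_expand; mx_linear_close. Qed.

End hamiltonian_flow.

Arguments ham_velocity {R n r}.
Arguments ham_force {R n r}.

Section stiefel_constraints.
Variables (R : realType) (n r : nat) (X P : 'M[R]_(n, r)).
Hypothesis XtX : X^T *m X = 1%:M.
Hypothesis tangent : X^T *m P + P^T *m X = 0.
Implicit Types (c : R) (G : 'M[R]_(n, r)).

Let mulmx_trX_X m (A : 'M[R]_(m, r)) : A *m X^T *m X = A.
Proof. by rewrite -mulmxA XtX mulmx1. Qed.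

Let mulmx_trX_P m (A : 'M[R]_(m, r)) : A *m X^T *m P = - (A *m P^T *m X).
Proof. by rewrite -!mulmxA -mulmxN; congr (_ *m _); apply/eqP; rewrite -addr_eq0 tangent. Qed.

Ltac use_constraints := mx_expand; rewrite ?XtX ?mulmx_trX_X ?mulmx_trX_P; mx_expand.

Lemma Psi_ham_flow c G :
  Psi (ham_velocity c X P) P + Psi X (ham_force c G X P) = G^T *m X - X^T *m G.
Proof. rewrite /Psi /ham_velocity /ham_force /Lambda; use_constraints; mx_linear_close. Qed.

Lemma momentum_velocity k :
  Phi X P *m X + k *: (X *m Psi X P) = ham_velocity (1 + 2%:R * k) X P.
Proof. rewrite /Phi /Psi /ham_velocity; use_constraints; mx_linear_close. Qed.

Lemma momentum_decomposition : P = Phi X P *m X - 2^-1 *: (X *m Psi X P).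
Proof. rewrite /Phi /Psi; use_constraints; mx_linear_close. Qed.

Lemma momentum_force c G :
  (X *m G^T - G *m X^T) *m X + Phi X P *m ham_velocity c X P
    - 2^-1 *: (ham_velocity c X P *m Psi X P + X *m (G^T *m X - X^T *m G))
  = ham_force c G X P.
Proof. rewrite /Phi /Psi /ham_velocity /ham_force /Lambda; use_constraints; mx_linear_close. Qed.

End stiefel_constraints.

Section momentum_derivative.
Variables (R : realType) (n r : nat) (X P : R -> 'M[R]_(n, r)) (t : R).
Hypotheses (dX : derivable X t 1) (dP : derivable P t 1).

Let PXt : derivable (fun s => P s *m (X s)^T) t 1.
Proof. exact: (derivable_mulmx dP (derivable_trmx dX)). Qed.
Let XPt : derivable (fun s => X s *m (P s)^T) t 1.
Proof. exact: (derivable_mulmx dX (derivable_trmx dP)). Qed.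
Let XtP : derivable (fun s => (X s)^T *m P s) t 1.
Proof. exact: (derivable_mulmx (derivable_trmx dX) dP). Qed.
Let PtX : derivable (fun s => (P s)^T *m X s) t 1.
Proof. exact: (derivable_mulmx (derivable_trmx dP) dX). Qed.

Lemma derivable_Phi : derivable (fun s => Phi (X s) (P s)) t 1.
Proof. exact: derivableB PXt XPt. Qed.

Lemma derivable_Psi : derivable (fun s => Psi (X s) (P s)) t 1.
Proof. exact: derivableB XtP PtX. Qed.

Lemma derive_Phi : 'D_1 (fun s => Phi (X s) (P s)) t =
  Phi ('D_1 X t) (P t) + Phi (X t) ('D_1 P t).
Proof.
rewrite (deriveB PXt XPt) (derive_mulmx dP (derivable_trmx dX)).
rewrite (derive_mulmx dX (derivable_trmx dP)) (derive_trmx dX) (derive_trmx dP).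
by rewrite /Phi [RHS]addrC addrACA -opprD (addrC (X t *m _)).
Qed.

Lemma derive_Psi : 'D_1 (fun s => Psi (X s) (P s)) t =
  Psi ('D_1 X t) (P t) + Psi (X t) ('D_1 P t).
Proof.
rewrite (deriveB XtP PtX) (derive_mulmx (derivable_trmx dX) dP).
rewrite (derive_mulmx (derivable_trmx dP) dX) (derive_trmx dX) (derive_trmx dP).
by rewrite /Psi addrACA -opprD (addrC ((P t)^T *m _)).
Qed.

Lemma derive_momentum_decomposition :
  (forall s, P s = Phi (X s) (P s) *m X s - 2^-1 *: (X s *m Psi (X s) (P s))) ->
  'D_1 P t = 'D_1 (fun s => Phi (X s) (P s)) t *m X t + Phi (X t) (P t) *m 'D_1 X t
    - 2^-1 *: ('D_1 X t *m Psi (X t) (P t) + X t *m 'D_1 (fun s => Psi (X s) (P s)) t).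
Proof.
move=> decomp.
have dPhiX := derivable_mulmx derivable_Phi dX.
have dXPsi := derivable_mulmx dX derivable_Psi.
have -> : 'D_1 P t = 'D_1 ((fun s => Phi (X s) (P s) *m X s)
                           - 2^-1 \*: (fun s => X s *m Psi (X s) (P s))) t.
  by congr ('D_1 _ t); apply/funext => s; rewrite {1}decomp.
rewrite (deriveB dPhiX (derivableZ dXPsi)) (deriveZ _ dXPsi).
by rewrite (derive_mulmx derivable_Phi dX) (derive_mulmx dX derivable_Psi).
Qed.
End momentum_derivative.

Arguments derive_momentum_decomposition {R n r X P t}.

Theorem lemma3 (R : realType) (n r : nat) (kappa : R) (Gamma : 'M[R]_(n, r))
    (X P : R -> 'M[R]_(n, r)) :
  -1 < kappa ->
  (forall t, derivable X t 1) ->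
  (forall t, derivable P t 1) ->
  (forall t, in_TstarV (X t) (P t)) ->
  (forall t, system1 kappa Gamma X P t) <-> (forall t, system2 kappa Gamma X P t).
Proof.
move=> _ dX dP onTV; split=> flow t; have [XtX tangent] := onTV t.
- have [eX eP] := flow t; rewrite /system2 !derive1E.
  rewrite !derive1E in eX eP.
  rewrite derive_Phi // derive_Psi // eX eP momentum_velocity //.
  split=> //; split; [exact: Phi_ham_flow | exact: Psi_ham_flow].
- have [eX [ePhi ePsi]] := flow t; rewrite /system1 !derive1E.
  rewrite !derive1E in eX ePhi ePsi; rewrite momentum_velocity // in eX.
  have decomp s : P s = Phi (X s) (P s) *m X s - 2^-1 *: (X s *m Psi (X s) (P s)).
    by have [XtXs tangents] := onTV s; apply: momentum_decomposition.
  rewrite (derive_momentum_decomposition (dX t) (dP t) decomp) ePhi ePsi eX.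
  by split=> //; apply: momentum_force.
Qed.
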